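(* Let $A$ be an MV-algebra and $d$ a $(\odot,\vee)$-derivation on $A$. The following are equivalent: (1) $d$ is isotone and $d(1)\in\mathbf{B}(A)$; (2) $d(x\oplus y)=d(x)\oplus d(y)$ for all $x,y\in A$; (3) $d(x\odot y)=d(x)\odot d(y)$ for all $x,y\in A$.
   Context: An MV-algebra is an algebra $(A,\oplus,{}^*,0)$ of type $(2,1,0)$ satisfying: $x\oplus(y\oplus z)=(x\oplus y)\oplus z$, $x\oplus y=y\oplus x$, $x\oplus 0=x$, $x^{**}=x$, $x\oplus 0^*=0^*$, $(x^*\oplus y)^*\oplus y=(y^*\oplus x)^*\oplus x$. Put $1=0^*$ and $x\odot y=(x^*\oplus y^* )^*$. The natural order is $x\le y$ iff $x^*\oplus y=1$, with lattice operations $x\vee y=(x\odot y^* )\oplus y$, $x\wedge y=x\odot(x^*\oplus y)$. The Boolean center is $\mathbf{B}(A)=\{x\in A: x\oplus x=x\}$. A $(\odot,\vee)$-derivation on $A$ is a map $d:A\to A$ with $d(x\odot y)=(d(x)\odot y)\vee(x\odot d(y))$ for all $x,y\in A$; it is isotone if $x\le y$ implies $d(x)\le d(y)$. *)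

Record MVAlgebra := {
  mv_car :> Type;
  mv_oplus : mv_car -> mv_car -> mv_car;
  mv_neg : mv_car -> mv_car;
  mv_zero : mv_car;
  mv_assoc : forall x y z, mv_oplus x (mv_oplus y z) = mv_oplus (mv_oplus x y) z;
  mv_comm : forall x y, mv_oplus x y = mv_oplus y x;
  mv_zero_r : forall x, mv_oplus x mv_zero = x;
  mv_negK : forall x, mv_neg (mv_neg x) = x;
  mv_one_absorb : forall x, mv_oplus x (mv_neg mv_zero) = mv_neg mv_zero;
  mv_luk : forall x y,
    mv_oplus (mv_neg (mv_oplus (mv_neg x) y)) y
    = mv_oplus (mv_neg (mv_oplus (mv_neg y) x)) x
}.

Arguments mv_oplus {A} : rename.
Arguments mv_neg {A} : rename.
Arguments mv_zero {A} : rename.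

Section Ops.
Variable A : MVAlgebra.

Definition mv_one : A := mv_neg mv_zero.
Definition mv_odot (x y : A) : A := mv_neg (mv_oplus (mv_neg x) (mv_neg y)).
Definition mv_le (x y : A) : Prop := mv_oplus (mv_neg x) y = mv_one.
Definition mv_join (x y : A) : A := mv_oplus (mv_odot x (mv_neg y)) y.
Definition mv_meet (x y : A) : A := mv_odot x (mv_oplus (mv_neg x) y).
Definition in_boolean_center (x : A) : Prop := mv_oplus x x = x.

Definition odot_join_derivation (d : A -> A) : Prop :=
  forall x y, d (mv_odot x y) = mv_join (mv_odot (d x) y) (mv_odot x (d y)).

Definition isotone (d : A -> A) : Prop :=
  forall x y, mv_le x y -> mv_le (d x) (d y).
End Ops.

Arguments mv_one {A}.
Arguments mv_odot {A}.
Arguments mv_le {A}.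
Arguments mv_join {A}.
Arguments mv_meet {A}.
Arguments in_boolean_center {A}.
Arguments odot_join_derivation {A}.
Arguments isotone {A}.

From Stdlib Require Import Setoid.

(* The proof rests on three observations.
   - Any additive or multiplicative self-map f of A is isotone and sends 1 to
     a Boolean element (2 -> 1 and 3 -> 1); this needs no derivation property.
   - Every derivation satisfies  x ⊙ d(1) <= d(x) <= x.  If moreover d is
     isotone and b := d(1) is Boolean, then d(x) <= d(1) = b as well, and since
     x ⊙ b is the meet of x and b for Boolean b, we get  d(x) = x ⊙ d(1).
   - For a Boolean element b the map x |-> x ⊙ b preserves both ⊕ and ⊙
     (1 -> 2 and 1 -> 3). *)

Set Implicit Arguments.

Section MVTheory.
Variable A : MVAlgebra.
Local Notation "x ⊕ y" := (@mv_oplus A x y) (at level 50, left associativity).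
Local Notation "¬ x" := (@mv_neg A x) (at level 35, right associativity).
Local Notation "x ⊙ y" := (@mv_odot A x y) (at level 40, left associativity).
Local Notation "x ≤ y" := (@mv_le A x y) (at level 70).
Local Notation o0 := (@mv_zero A).
Local Notation o1 := (@mv_one A).

Lemma addA (x y z : A) : x ⊕ (y ⊕ z) = x ⊕ y ⊕ z. Proof. apply mv_assoc. Qed.
Lemma addC (x y : A) : x ⊕ y = y ⊕ x. Proof. apply mv_comm. Qed.
Lemma add0 (x : A) : x ⊕ o0 = x. Proof. apply mv_zero_r. Qed.
Lemma add0l (x : A) : o0 ⊕ x = x. Proof. rewrite addC; apply add0. Qed.
Lemma add1 (x : A) : x ⊕ o1 = o1. Proof. apply mv_one_absorb. Qed.
Lemma add1l (x : A) : o1 ⊕ x = o1. Proof. rewrite addC; apply add1. Qed.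
Lemma negK (x : A) : ¬ ¬ x = x. Proof. apply mv_negK. Qed.
Lemma neg1 : ¬ o1 = o0. Proof. apply negK. Qed.

Lemma neg_inj (x y : A) : ¬ x = ¬ y -> x = y.
Proof. intro E. rewrite <- (negK x), <- (negK y), E. reflexivity. Qed.

Lemma neg_add (x y : A) : ¬ (x ⊕ y) = ¬ x ⊙ ¬ y.
Proof. unfold mv_odot. rewrite !negK. reflexivity. Qed.
Lemma neg_mul (x y : A) : ¬ (x ⊙ y) = ¬ x ⊕ ¬ y.
Proof. apply negK. Qed.

Lemma mulC (x y : A) : x ⊙ y = y ⊙ x.
Proof. unfold mv_odot. rewrite addC. reflexivity. Qed.
Lemma mulA (x y z : A) : x ⊙ (y ⊙ z) = x ⊙ y ⊙ z.
Proof. unfold mv_odot. rewrite !negK, addA. reflexivity. Qed.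
Lemma mul1 (x : A) : x ⊙ o1 = x.
Proof. unfold mv_odot. rewrite neg1, add0, negK. reflexivity. Qed.
Lemma mul0 (x : A) : x ⊙ o0 = o0.
Proof. unfold mv_odot. fold (@mv_one A). rewrite add1, neg1. reflexivity. Qed.
Lemma mul0l (x : A) : o0 ⊙ x = o0.
Proof. rewrite mulC; apply mul0. Qed.

Lemma addN (x : A) : ¬ x ⊕ x = o1.
Proof.
  pose proof (mv_luk A x o1) as E. fold (@mv_one A) in E.
  rewrite add1, neg1, add0l in E. symmetry; exact E.
Qed.
Lemma mulN (x : A) : x ⊙ ¬ x = o0.
Proof. unfold mv_odot. rewrite negK, addN, neg1. reflexivity. Qed.

Lemma le_refl (x : A) : x ≤ x. Proof. apply addN. Qed.
Lemma le_one (x : A) : x ≤ o1. Proof. apply add1. Qed.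
Lemma le_zero (x : A) : o0 ≤ x. Proof. apply add1l. Qed.

Lemma le_add_r (x y w : A) : x ≤ y -> x ≤ y ⊕ w.
Proof. unfold mv_le; intro H. rewrite addA, H, add1l. reflexivity. Qed.
Lemma le_addr (u w : A) : u ≤ u ⊕ w.
Proof. apply le_add_r, le_refl. Qed.
Lemma le_addl (u w : A) : u ≤ w ⊕ u.
Proof. rewrite addC. apply le_addr. Qed.

(* Commutativity of the join is exactly the Łukasiewicz axiom. *)
Lemma join_comm (x y : A) : mv_join x y = mv_join y x.
Proof. unfold mv_join, mv_odot. rewrite !negK. apply mv_luk. Qed.
Lemma le_join_r (x y : A) : y ≤ mv_join x y.
Proof. apply le_addl. Qed.
Lemma le_join_l (x y : A) : x ≤ mv_join x y.
Proof. rewrite join_comm. apply le_join_r. Qed.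
Lemma join_le (x y : A) : x ≤ y -> mv_join x y = y.
Proof.
  unfold mv_le, mv_join, mv_odot; intro H. rewrite negK, H, neg1, add0l. reflexivity.
Qed.

Lemma antisym (x y : A) : x ≤ y -> y ≤ x -> x = y.
Proof.
  intros Hxy Hyx. rewrite <- (join_le Hxy), <- (join_le Hyx) at 1. apply join_comm.
Qed.
Lemma le_zero_eq (x : A) : x ≤ o0 -> x = o0.
Proof. intro H. apply antisym; [exact H | apply le_zero]. Qed.

Lemma le_decomp (x y : A) : x ≤ y -> y = x ⊕ (y ⊙ ¬ x).
Proof.
  intro H. rewrite <- (join_le H) at 1. rewrite join_comm. apply addC.
Qed.

Lemma le_trans (x y z : A) : x ≤ y -> y ≤ z -> x ≤ z.
Proof. intros Hxy Hyz. rewrite (le_decomp Hyz). apply le_add_r; exact Hxy. Qed.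

Lemma add_mono (a a' c : A) : a ≤ a' -> a ⊕ c ≤ a' ⊕ c.
Proof.
  intro H. rewrite (le_decomp H), <- addA, (addC (a' ⊙ ¬ a) c), addA. apply le_addr.
Qed.
Lemma add_mono_l (a a' c : A) : a ≤ a' -> c ⊕ a ≤ c ⊕ a'.
Proof. intro H. rewrite (addC c a), (addC c a'). apply add_mono; exact H. Qed.
Lemma neg_anti (a a' : A) : a ≤ a' -> ¬ a' ≤ ¬ a.
Proof. unfold mv_le; intro H. rewrite negK, addC. exact H. Qed.
Lemma mul_mono (a a' c : A) : a ≤ a' -> c ⊙ a ≤ c ⊙ a'.
Proof. intro H. apply neg_anti, add_mono_l, neg_anti; exact H. Qed.

Lemma mul_le (x y : A) : x ⊙ y ≤ x.
Proof.
  unfold mv_le, mv_odot. rewrite negK, <- addA, (addC (¬ y) x), addA, addN, add1l.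
  reflexivity.
Qed.
Lemma mul_le_r (x y : A) : x ⊙ y ≤ y.
Proof. rewrite mulC. apply mul_le. Qed.

Lemma mul_eq0_le (x y : A) : x ⊙ y = o0 -> x ≤ ¬ y.
Proof. intro E. unfold mv_le. rewrite <- neg_mul, E. reflexivity. Qed.

Lemma meet_comm (x y : A) : mv_meet x y = mv_meet y x.
Proof.
  unfold mv_meet, mv_odot. f_equal.
  pose proof (mv_luk A (¬ x) (¬ y)) as E. rewrite !negK in E.
  rewrite (addC (¬ x) y), (addC (¬ y) x), (addC (¬ x)), (addC (¬ y)).
  symmetry. exact E.
Qed.
Lemma meet_le (x y : A) : x ≤ y -> mv_meet x y = x.
Proof. unfold mv_meet; intro H. unfold mv_le in H. rewrite H. apply mul1. Qed.

Lemma distr_le (x y z : A) : x ⊙ (y ⊕ z) ≤ (x ⊙ y) ⊕ z.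
Proof.
  assert (Hy : y ≤ ¬ x ⊕ (x ⊙ y)).
  { replace (¬ x ⊕ (x ⊙ y)) with (mv_join y (¬ x)) by
      (unfold mv_join; rewrite negK, (mulC y x); apply addC).
    apply le_join_l. }
  pose proof (add_mono z Hy) as H. unfold mv_le in *.
  rewrite <- H. unfold mv_odot at 1. rewrite negK.
  rewrite (addC (¬ x) (¬ (y ⊕ z))), <- (addA (¬ (y ⊕ z))), (addA (¬ x)).
  reflexivity.
Qed.

Lemma bool_mul (b : A) : b ⊕ b = b -> b ⊙ b = b.
Proof.
  intro Hb. apply antisym; [apply mul_le |].
  assert (E : b ⊙ (¬ b ⊕ ¬ b) = o0).
  { pose proof (meet_comm b (¬ b)) as E. unfold mv_meet in E.
    rewrite E, negK, Hb, mulC. apply mulN. }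
  apply mul_eq0_le in E. exact E.
Qed.

Lemma bool_add (b : A) : b ⊙ b = b -> b ⊕ b = b.
Proof.
  intro Hb.
  assert (Hn : ¬ b ⊕ ¬ b = ¬ b) by (rewrite <- neg_mul, Hb; reflexivity).
  apply bool_mul in Hn. apply neg_inj. rewrite neg_add. exact Hn.
Qed.

Lemma mul_bool_le (b z : A) : b ⊙ b = b -> z ≤ b -> z ⊙ b = z.
Proof.
  intros Hb H. rewrite <- (meet_le H), meet_comm. unfold mv_meet.
  rewrite mulC, mulA, Hb. reflexivity.
Qed.

Lemma le_glb (b z x : A) : b ⊙ b = b -> z ≤ x -> z ≤ b -> z ≤ x ⊙ b.
Proof.
  intros Hb Hx Hz. rewrite <- (mul_bool_le Hb Hz), (mulC z b), (mulC x b).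
  apply mul_mono; exact Hx.
Qed.

Lemma bool_distr (b x y : A) : b ⊕ b = b -> (x ⊕ y) ⊙ b = x ⊙ b ⊕ y ⊙ b.
Proof.
  intro Ha. pose proof (bool_mul Ha) as Hm. apply antisym.
  - rewrite mulC, <- Hm at 1. rewrite <- mulA.
    apply le_trans with (b ⊙ (y ⊕ b ⊙ x)).
    + rewrite (addC y). apply mul_mono, distr_le.
    + rewrite (addC (x ⊙ b)), (mulC x), (mulC y). apply distr_le.
  - apply le_glb; [exact Hm | |].
    + apply le_trans with (x ⊕ y ⊙ b); [apply add_mono | apply add_mono_l];
        apply mul_le.
    + rewrite <- Ha at 3.
      apply le_trans with (b ⊕ y ⊙ b); [apply add_mono | apply add_mono_l];
        apply mul_le_r.
Qed.

Lemma bool_mul_hom (b x y : A) : b ⊙ b = b -> (x ⊙ y) ⊙ b = (x ⊙ b) ⊙ (y ⊙ b).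
Proof.
  intro Hm. rewrite <- Hm at 1.
  rewrite !mulA, <- (mulA x y b), (mulC y b), (mulA x b y). reflexivity.
Qed.

Section Homomorphisms.
Variable f : A -> A.

Lemma additive_isotone_boolean :
  (forall x y, f (x ⊕ y) = f x ⊕ f y) -> isotone f /\ in_boolean_center (f o1).
Proof.
  intro Hf. split.
  - intros x y H. rewrite (le_decomp H), Hf. apply le_addr.
  - unfold in_boolean_center. rewrite <- Hf, add1. reflexivity.
Qed.

Lemma multiplicative_isotone_boolean :
  (forall x y, f (x ⊙ y) = f x ⊙ f y) -> isotone f /\ in_boolean_center (f o1).
Proof.
  intro Hf. split.
  - intros x y H. rewrite <- (meet_le H), meet_comm. unfold mv_meet.
    rewrite Hf. apply mul_le.
  - apply bool_add. rewrite <- Hf, mul1. reflexivity.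
Qed.
End Homomorphisms.

Section Derivation.
Variable d : A -> A.
Hypothesis Hd : odot_join_derivation d.

Lemma deriv_zero : d o0 = o0.
Proof.
  rewrite <- (mul0 o0) at 1. rewrite Hd, !mul0, mul0l.
  unfold mv_join. rewrite mul0l, add0. reflexivity.
Qed.

(* d is decreasing: from d(x ⊙ ¬x) = 0 we get d(x) ⊙ ¬x = 0. *)
Lemma deriv_le (x : A) : d x ≤ x.
Proof.
  assert (E : d x ⊙ ¬ x = o0).
  { apply le_zero_eq. rewrite <- deriv_zero, <- (mulN x), Hd. apply le_join_l. }
  apply mul_eq0_le in E. rewrite negK in E. exact E.
Qed.

(* d(x) = d(x ⊙ 1) lies above x ⊙ d(1). *)
Lemma deriv_ge (x : A) : x ⊙ d o1 ≤ d x.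
Proof.
  pose proof (Hd x o1) as E. rewrite !mul1 in E. rewrite E. apply le_join_r.
Qed.

Lemma deriv_mult_form :
  isotone d -> in_boolean_center (d o1) -> forall x, d x = x ⊙ d o1.
Proof.
  intros Hi Hb x. apply antisym.
  - apply le_glb; [apply bool_mul, Hb | apply deriv_le | apply Hi, le_one].
  - apply deriv_ge.
Qed.

Lemma isotone_boolean_additive :
  isotone d /\ in_boolean_center (d o1) -> forall x y, d (x ⊕ y) = d x ⊕ d y.
Proof.
  intros [Hi Hb] x y. pose proof (deriv_mult_form Hi Hb) as F.
  rewrite (F (x ⊕ y)), (F x), (F y). apply bool_distr, Hb.
Qed.

Lemma isotone_boolean_multiplicative :
  isotone d /\ in_boolean_center (d o1) -> forall x y, d (x ⊙ y) = d x ⊙ d y.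
Proof.
  intros [Hi Hb] x y. pose proof (deriv_mult_form Hi Hb) as F.
  rewrite (F (x ⊙ y)), (F x), (F y). apply bool_mul_hom, bool_mul, Hb.
Qed.
End Derivation.
End MVTheory.

Theorem proposition3p22 (A : MVAlgebra) (d : A -> A) :
  odot_join_derivation d ->
  ((isotone d /\ in_boolean_center (d mv_one)) <->
     (forall x y : A, d (mv_oplus x y) = mv_oplus (d x) (d y)))
  /\
  ((forall x y : A, d (mv_oplus x y) = mv_oplus (d x) (d y)) <->
     (forall x y : A, d (mv_odot x y) = mv_odot (d x) (d y))).
Proof.
  intro Hd.
  pose proof (isotone_boolean_additive Hd) as one_two.
  pose proof (isotone_boolean_multiplicative Hd) as one_three.
  pose proof (@additive_isotone_boolean A d) as two_one.
  pose proof (@multiplicative_isotone_boolean A d) as three_one.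
  tauto.
Qed.
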